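(* Let $d\in\mathcal D$ be optimal, i.e. $J^d_{\mu,\sigma}=\max_{d''\in\mathcal D}J^{d''}_{\mu,\sigma}$, and write $(\mathbf P,\mathbf r,J_\mu,\mathbf g)$ for its quantities. Then for every $d'\in\mathcal D$ with $(\mathbf P',\mathbf r')$, $$\sum_{j\in\mathcal S}p'(i,j)g(j)+r'(i)-\beta(r'(i)-J_\mu)^2\ \le\ \sum_{j\in\mathcal S}p(i,j)g(j)+r(i)-\beta(r(i)-J_\mu)^2\qquad\text{for all } i\in\mathcal S.$$
   Context: Let $\mathcal S=\{1,\dots,S\}$ be a finite state space and $\mathcal A$ a finite action set. For $i,j\in\mathcal S$, $a\in\mathcal A$, let $p^a(i,j)\ge 0$ with $\sum_{j}p^a(i,j)=1$ be transition probabilities and $r(i,a)\in\mathbb R$ rewards. A deterministic stationary policy is a map $d:\mathcal S\to\mathcal A$; $\mathcal D$ denotes the set of such policies. Under $d$, $\mathbf P^d$ is the matrix with entries $p(i,j)=p^{d(i)}(i,j)$ and $\mathbf r^d$ the vector with entries $r(i)=r(i,d(i))$. Standing assumption: for every $d\in\mathcal D$ the chain with transition matrix $\mathbf P^d$ is irreducible, so it has a unique stationary distribution $\boldsymbol\pi^d$ (row vector, $\boldsymbol\pi^d\mathbf P^d=\boldsymbol\pi^d$, $\boldsymbol\pi^d\mathbf 1=1$) with all entries strictly positive. Define $J^d_\mu=\boldsymbol\pi^d\mathbf r^d$, $J^d_\sigma=\sum_i\pi^d(i)(r(i,d(i))-J^d_\mu)^2$, and for fixed $\beta>0$, $J^d_{\mu,\sigma}=J^d_\mu-\beta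 J^d_\sigma=\boldsymbol\pi^d\mathbf f^d$ with $f^d(i)=r(i,d(i))-\beta(r(i,d(i))-J^d_\mu)^2$. The performance potential $\mathbf g^d$ is any solution of $\mathbf g^d=\mathbf f^d-J^d_{\mu,\sigma}\mathbf 1+\mathbf P^d\mathbf g^d$ (unique up to an additive constant vector). *)

From HB Require Import structures.
From mathcomp Require Import all_boot all_order all_algebra.
Set Implicit Arguments. Unset Strict Implicit. Unset Printing Implicit Defensive.
Import Order.TTheory GRing.Theory Num.Theory.
Local Open Scope ring_scope.

(* States are 'I_n (the paper's {1,...,S}), actions a finite type A.
   Transition kernel p a i j = p^a(i,j), rewards r i a = r(i,a).
   A deterministic stationary policy is a function d : 'I_n -> A. *)

Fixpoint mxpow (R : pzRingType) (n : nat) (P : 'M[R]_n) (k : nat) : 'M[R]_n :=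
  match k with
  | O => 1%:M
  | k'.+1 => P *m mxpow P k'
  end.

Definition irreducible (R : numDomainType) (n : nat) (P : 'M[R]_n) : Prop :=
  forall i j : 'I_n, exists k : nat, 0 < mxpow P k i j.

Definition Pmat (R : pzRingType) (n : nat) (A : finType)
  (p : A -> 'I_n -> 'I_n -> R) (d : 'I_n -> A) : 'M[R]_n :=
  \matrix_(i, j) p (d i) i j.

Definition rvec (R : pzRingType) (n : nat) (A : finType)
  (r : 'I_n -> A -> R) (d : 'I_n -> A) : 'cV[R]_n :=
  \col_i r i (d i).

Definition stationary (R : pzRingType) (n : nat) (P : 'M[R]_n) (pi : 'rV[R]_n) : Prop :=
  pi *m P = pi /\ \sum_i pi 0 i = 1.

Definition Jmu (R : pzRingType) (n : nat) (pi : 'rV[R]_n) (rv : 'cV[R]_n) : R :=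
  \sum_i pi 0 i * rv i 0.

Definition Jsigma (R : pzRingType) (n : nat) (pi : 'rV[R]_n) (rv : 'cV[R]_n) : R :=
  \sum_i pi 0 i * (rv i 0 - Jmu pi rv) ^+ 2.

Definition Jms (R : pzRingType) (n : nat) (beta : R) (pi : 'rV[R]_n) (rv : 'cV[R]_n) : R :=
  Jmu pi rv - beta * Jsigma pi rv.

Definition fvec (R : pzRingType) (n : nat) (beta : R) (pi : 'rV[R]_n) (rv : 'cV[R]_n)
  : 'cV[R]_n :=
  \col_i (rv i 0 - beta * (rv i 0 - Jmu pi rv) ^+ 2).

Definition potential (R : pzRingType) (n : nat) (beta : R) (P : 'M[R]_n)
  (pi : 'rV[R]_n) (rv : 'cV[R]_n) (g : 'cV[R]_n) : Prop :=
  g = fvec beta pi rv - const_mx (Jms beta pi rv) + P *m g.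

From HB Require Import structures.
From mathcomp Require Import all_boot all_order all_algebra.
From mathcomp Require Import ring lra.
Set Implicit Arguments. Unset Strict Implicit. Unset Printing Implicit Defensive.
Import Order.TTheory GRing.Theory Num.Theory.
Local Open Scope ring_scope.

(* Write Q_d(i) = sum_j p^d(i,j) g(j) + r^d(i) - beta (r^d(i) - J_mu)^2 for the
   "Q-factor" of a policy d, measured against the potential g and the mean
   reward J_mu of the fixed policy.  The proof has three ingredients:
   1. a stationary distribution of an irreducible stochastic matrix is
      strictly positive (the positive part of it is superharmonic, hence
      invariant by mass conservation, hence positive by irreducibility);
   2. a performance-difference formula: for any policy d1 with stationary
      distribution x, the x-average of Q_{d1} - Q_d equals
      J_{mu,sigma}^{d1} - J_{mu,sigma}^d - beta (J_mu^{d1} - J_mu^d)^2;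
   3. Q_d(i) depends only on the action d(i).
   For the theorem, switch the optimal policy d to d'(i) at state i only:
   the average in (2) collapses to pi^{d1}(i) (Q_{d'}(i) - Q_d(i)), which is
   nonpositive by optimality, and pi^{d1}(i) > 0 by (1). *)

Section StochasticMatrix.
Variables (R : realFieldType) (n : nat) (P : 'M[R]_n).
Hypothesis P_ge0 : forall i j, 0 <= P i j.
Hypothesis P_row1 : forall i, \sum_j P i j = 1.

Lemma mxpow_ge0 k i j : 0 <= mxpow P k i j.
Proof.
elim: k i j => [|k IH] i j /=; first by rewrite mxE; case: (i == j).
by rewrite mxE; apply: sumr_ge0 => l _; apply: mulr_ge0.
Qed.

Lemma mass_preserved (y : 'rV[R]_n) : \sum_k (y *m P) 0 k = \sum_k y 0 k.
Proof.
under eq_bigr do rewrite mxE.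
rewrite exchange_big /=; apply: eq_bigr => l _.
by rewrite -mulr_sumr P_row1 mulr1.
Qed.

Lemma superharmonic_invariant (y : 'rV[R]_n) :
  (forall k, y 0 k <= (y *m P) 0 k) -> y *m P = y.
Proof.
move=> y_le.
have gap0 : \sum_k ((y *m P) 0 k - y 0 k) = 0 by rewrite sumrB mass_preserved subrr.
apply/matrixP => a k; rewrite (ord1 a); apply/eqP; rewrite -subr_eq0; apply/eqP.
by apply: (psumr_eq0P _ gap0) => // l _; rewrite subr_ge0.
Qed.

Lemma stationary_pos (x : 'rV[R]_n) :
  irreducible P -> stationary P x -> forall j, 0 < x 0 j.
Proof.
move=> irr [xP x1] j.
pose y : 'rV[R]_n := \row_k Num.max (x 0 k) 0.
have y_ge0 k : 0 <= y 0 k by rewrite mxE le_max lexx orbT.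
have x_le_y k : x 0 k <= y 0 k by rewrite mxE le_max lexx.
have yP : y *m P = y.
  apply: superharmonic_invariant => k; rewrite [y 0 k]mxE ge_max; apply/andP; split.
    rewrite -[in X in X <= _]xP !mxE; apply: ler_sum => l _.
    exact: ler_wpM2r.
  by rewrite mxE; apply: sumr_ge0 => l _; apply: mulr_ge0.
have y_pow k : y *m mxpow P k = y.
  by elim: k => [|k IH] /=; rewrite ?mulmx1 // mulmxA yP IH.
have [l xl] : exists l, 0 < x 0 l.
  case: (boolP [exists l, 0 < x 0 l]) => [/existsP //|/existsPn x_le0].
  have : \sum_k x 0 k <= 0 by apply: sumr_le0 => k _; rewrite leNgt x_le0.
  by rewrite x1 ler10.
have [k Pk_lj] := irr l j.
have yj : 0 < y 0 j.
  rewrite -(y_pow k) mxE (bigD1 l) //=; apply: ltr_pwDl.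
    exact: mulr_gt0 (lt_le_trans xl (x_le_y l)) Pk_lj.
  by apply: sumr_ge0 => a _; apply: mulr_ge0 (mxpow_ge0 _ _ _).
by move: yj; rewrite mxE lt_max ltxx orbF.
Qed.

End StochasticMatrix.

Definition qfactor (R : pzRingType) (n : nat) (beta c : R) (P : 'M[R]_n)
  (rv g : 'cV[R]_n) (i : 'I_n) : R :=
  \sum_j P i j * g j 0 + rv i 0 - beta * (rv i 0 - c) ^+ 2.

Lemma sq_dev_expand (R : comPzRingType) n (x : 'rV[R]_n) (a : 'cV[R]_n) c :
  \sum_k x 0 k = 1 ->
  \sum_k x 0 k * (a k 0 - c) ^+ 2 =
  \sum_k x 0 k * (a k 0) ^+ 2 - 2 * c * Jmu x a + c ^+ 2.
Proof.
move=> x1.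
transitivity (\sum_k (x 0 k * (a k 0) ^+ 2 - (2 * c) * (x 0 k * a k 0) + c ^+ 2 * x 0 k)).
  by apply: eq_bigr => k _; ring.
by rewrite big_split sumrB /= -!mulr_sumr x1 mulr1.
Qed.

Lemma qfactor_potential (R : comPzRingType) n beta (P : 'M[R]_n) pi (rv g : 'cV[R]_n) :
  potential beta P pi rv g ->
  forall k, qfactor beta (Jmu pi rv) P rv g k = g k 0 + Jms beta pi rv.
Proof.
move=> pot k; have := congr1 (fun M : 'cV[R]_n => M k 0) pot.
rewrite /qfactor /fvec !mxE => ->; ring.
Qed.

Lemma performance_difference (R : comPzRingType) n (x pi : 'rV[R]_n) (P1 P : 'M[R]_n)
  (r1 rv g : 'cV[R]_n) beta :
  x *m P1 = x -> \sum_k x 0 k = 1 -> potential beta P pi rv g ->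
  \sum_k x 0 k * (qfactor beta (Jmu pi rv) P1 r1 g k - qfactor beta (Jmu pi rv) P rv g k)
  = Jms beta x r1 - Jms beta pi rv - beta * (Jmu x r1 - Jmu pi rv) ^+ 2.
Proof.
move=> xP x1 pot.
have xPg : \sum_k x 0 k * \sum_l P1 k l * g l 0 = \sum_l x 0 l * g l 0.
  under eq_bigr do rewrite mulr_sumr.
  rewrite exchange_big /=; apply: eq_bigr => l _.
  have := congr1 (fun M : 'rV[R]_n => M 0 l) xP; rewrite mxE => <-.
  by rewrite mulr_suml; apply: eq_bigr => k _; rewrite mulrA.
transitivity (\sum_k x 0 k * \sum_l P1 k l * g l 0 + Jmu x r1
   - beta * \sum_k x 0 k * (r1 k 0 - Jmu pi rv) ^+ 2
   - \sum_k x 0 k * g k 0 - Jms beta pi rv * \sum_k x 0 k).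
  rewrite /Jmu !mulr_sumr -big_split /= -!sumrB; apply: eq_bigr => k _.
  rewrite (qfactor_potential pot) /qfactor; ring.
rewrite xPg sq_dev_expand // x1 /Jms /Jsigma (sq_dev_expand _ _ x1); ring.
Qed.

Lemma qfactor_local (R : pzRingType) n (A : finType) (p : A -> 'I_n -> 'I_n -> R)
  (r : 'I_n -> A -> R) beta c g (d1 d2 : 'I_n -> A) k :
  d1 k = d2 k ->
  qfactor beta c (Pmat p d1) (rvec r d1) g k = qfactor beta c (Pmat p d2) (rvec r d2) g k.
Proof.
move=> e; rewrite /qfactor !mxE e.
by congr (_ + _ - _); apply: eq_bigr => l _; rewrite !mxE e.
Qed.

Theorem theorem2 (R : realFieldType) (n : nat) (A : finType)
  (p : A -> 'I_n -> 'I_n -> R) (r : 'I_n -> A -> R) (beta : R)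
  (pi : ('I_n -> A) -> 'rV[R]_n)
  (d : 'I_n -> A) (g : 'cV[R]_n) :
  0 < beta ->
  (forall a i j, 0 <= p a i j) ->
  (forall a i, \sum_j p a i j = 1) ->
  (forall d0 : 'I_n -> A, irreducible (Pmat p d0)) ->
  (forall d0 : 'I_n -> A, stationary (Pmat p d0) (pi d0)) ->
  (forall d'' : 'I_n -> A,
     Jms beta (pi d'') (rvec r d'') <= Jms beta (pi d) (rvec r d)) ->
  potential beta (Pmat p d) (pi d) (rvec r d) g ->
  forall (d' : 'I_n -> A) (i : 'I_n),
    \sum_j Pmat p d' i j * g j 0 + rvec r d' i 0
      - beta * (rvec r d' i 0 - Jmu (pi d) (rvec r d)) ^+ 2
    <= \sum_j Pmat p d i j * g j 0 + rvec r d i 0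
      - beta * (rvec r d i 0 - Jmu (pi d) (rvec r d)) ^+ 2.
Proof.
move=> beta_gt0 p_ge0 p_row1 irr stat opt pot d' i.
pose Q (e : 'I_n -> A) := qfactor beta (Jmu (pi d) (rvec r d)) (Pmat p e) (rvec r e) g.
change (Q d' i <= Q d i); rewrite -subr_le0.
pose d1 k := if k == i then d' i else d k.
have [x1P x1_sum] := stat d1.
have x1i_gt0 : 0 < pi d1 0 i.
  apply: (stationary_pos _ _ (irr d1) (stat d1)) => [a b|a]; first by rewrite mxE.
  by under eq_bigr do rewrite mxE.
have Q_off k : k != i -> Q d1 k - Q d k = 0.
  move=> ki; rewrite /Q (qfactor_local _ _ _ _ _ (_ : d1 k = d k)) ?subrr //.
  by rewrite /d1 (negbTE ki).
have Q_at_i : Q d1 i = Q d' i by apply: qfactor_local; rewrite /d1 eqxx.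
have diff := performance_difference (rvec r d1) x1P x1_sum pot.
rewrite (bigD1 i) //= big1 ?addr0 in diff; last by move=> k /Q_off ->; rewrite mulr0.
have : pi d1 0 i * (Q d' i - Q d i) <= 0.
  rewrite -Q_at_i diff; have := opt d1.
  have : 0 <= beta * (Jmu (pi d1) (rvec r d1) - Jmu (pi d) (rvec r d)) ^+ 2.
    by rewrite mulr_ge0 ?sqr_ge0 ?ltW.
  lra.
by rewrite pmulr_rle0.
Qed.
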